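(* Let $\mathfrak g$ be one of the complex simple Lie algebras $\mathfrak{sl}_3$, $\mathfrak{sp}_2$, or $\mathfrak g_2$, with a choice of positive roots $\Sigma^+$. Then, as a rational function, $$\sum_{\substack{\beta,\gamma\in\Sigma^+\\ \beta\neq\gamma}}\frac{\langle\beta,\gamma\rangle}{\beta\,\gamma}=0.$$
   Context: Roots are regarded as linear functions (on the real Cartan subspace, equivalently on its dual via the inner product), so $\frac{\langle\beta,\gamma\rangle}{\beta\gamma}$ is a rational function whose numerator is the constant $\langle\beta,\gamma\rangle$, the inner product on roots induced by the Killing form. *)

From mathcomp Require Import all_boot all_order all_algebra.
Set Implicit Arguments. Unset Strict Implicit. Unset Printing Implicit Defensive.
Import Order.TTheory GRing.Theory Num.Theory.
Local Open Scope ring_scope.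

(* The three rank-2 complex simple Lie algebras of the statement:
   sl_3 (type A2), sp_2 = sp(4) (type C2), g_2 (type G2). *)
Inductive rank2_type := TypeA2 | TypeC2 | TypeG2.

(* Gram matrix (g11, g12, g22) of the simple roots a1, a2 for an invariant
   inner product (a positive multiple of the one induced by the Killing form).
   C2, G2: a1 short, a2 long. *)
Definition gram (t : rank2_type) : int * int * int :=
  match t with
  | TypeA2 => ((2%Z : int), (-1)%Z, (2%Z : int))
  | TypeC2 => (1%Z, (-1)%Z, 2%Z)
  | TypeG2 => (2%Z, (-3)%Z, 6%Z)
  end.

(* Standard positive roots, written in coordinates w.r.t. simple roots. *)
Definition std_pos_roots (t : rank2_type) : seq (int * int) :=
  match t with
  | TypeA2 => [:: (1%Z, 0%Z); (0%Z, 1%Z); (1%Z, 1%Z)]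
  | TypeC2 => [:: (1%Z, 0%Z); (0%Z, 1%Z); (1%Z, 1%Z); (2%Z, 1%Z)]
  | TypeG2 => [:: (1%Z, 0%Z); (0%Z, 1%Z); (1%Z, 1%Z); (2%Z, 1%Z);
                  (3%Z, 1%Z); (3%Z, 2%Z)]
  end.

(* A choice of positive roots: one root out of each pair {b, -b}; every
   positive system arises this way for a suitable sign function s. *)
Definition pos_system (t : rank2_type) (s : nat -> bool) : seq (int * int) :=
  mkseq (fun i => let b := nth (0, 0) (std_pos_roots t) i in
                  if s i then (- b.1, - b.2) else b)
        (size (std_pos_roots t)).

Definition rform (t : rank2_type) (u v : int * int) : int :=
  let: (g11, g12, g22) := gram t in
  u.1 * v.1 * g11 + (u.1 * v.2 + u.2 * v.1) * g12 + u.2 * v.2 * g22.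

(* The root b viewed as a linear function on the Cartan subspace (identified
   with its dual via the inner product); x = x.1 a1 + x.2 a2, value <b, x>. *)
Definition root_fun (R : numFieldType) (t : rank2_type) (b : int * int)
    (x : R * R) : R :=
  let: (g11, g12, g22) := gram t in
  (b.1 * g11 + b.2 * g12)%:~R * x.1 + (b.1 * g12 + b.2 * g22)%:~R * x.2.

(* Each summand is unchanged when a root b is replaced by -b, since both
   <b, c> and the product of the root values change sign; so one may assume
   the standard positive system.  Every root is an integer combination of the
   simple roots, hence the sum is a rational function of the values p, q of
   the two simple roots, and for each of the three types it vanishes by direct
   computation. *)

From mathcomp Require Import all_boot all_order all_algebra.
From mathcomp Require Import ring.
Import Order.TTheory GRing.Theory Num.Theory.
Set Implicit Arguments. Unset Strict Implicit.

Local Open Scope ring_scope.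

Section RootForms.

Variables (R : numFieldType) (t : rank2_type).

Lemma root_fun_linear (x : R * R) :
  exists p q : R, forall b, root_fun t b x = b.1%:~R * p + b.2%:~R * q.
Proof.
exists (root_fun t (1, 0) x), (root_fun t (0, 1) x) => -[b1 b2].
case: t; case: x => x1 x2; rewrite /root_fun /= ?(intrD, intrM, intrN, mulrNz); ring.
Qed.

Lemma root_funN (b : int * int) (x : R * R) : root_fun t (- b) x = - root_fun t b x.
Proof. by have [p [q coord]] := root_fun_linear x; rewrite !coord /= !intrN; ring. Qed.

Lemma rformNl (b c : int * int) : rform t (- b) c = - rform t b c.
Proof. by case: t; rewrite /rform /=; ring. Qed.

Lemma rformNr (b c : int * int) : rform t b (- c) = - rform t b c.
Proof. by case: t; rewrite /rform /=; ring. Qed.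

Definition pair_term (x : R * R) (b c : int * int) : R :=
  (rform t b c)%:~R / (root_fun t b x * root_fun t c x).

Lemma pair_termNl x b c : pair_term x (- b) c = pair_term x b c.
Proof.
by rewrite /pair_term rformNl root_funN intrN (mulNr (root_fun t b x)) invrN mulrNN.
Qed.

Lemma pair_termNr x b c : pair_term x b (- c) = pair_term x b c.
Proof. by rewrite /pair_term rformNr root_funN intrN mulrN invrN mulrNN. Qed.

Lemma pair_term_signs x (sb sc : bool) b c :
  pair_term x (if sb then - b else b) (if sc then - c else c) = pair_term x b c.
Proof. by case: sb; case: sc; rewrite ?pair_termNl ?pair_termNr. Qed.

End RootForms.

Lemma size_pos_system t s : size (pos_system t s) = size (std_pos_roots t).
Proof. exact: size_mkseq. Qed.

Lemma nth_pos_system t s i : (i < size (std_pos_roots t))%N ->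
  (pos_system t s)`_i = if s i then - (std_pos_roots t)`_i else (std_pos_roots t)`_i.
Proof. exact: nth_mkseq. Qed.

Lemma sum_pos_system (R : numFieldType) t s (x : R * R) :
  \sum_(i < size (pos_system t s)) \sum_(j < size (pos_system t s) | i != j)
     ((rform t (pos_system t s)`_i (pos_system t s)`_j)%:~R
        / (root_fun t (pos_system t s)`_i x * root_fun t (pos_system t s)`_j x))
  = \sum_(i < size (std_pos_roots t)) \sum_(j < size (std_pos_roots t) | i != j)
      pair_term t x (std_pos_roots t)`_i (std_pos_roots t)`_j.
Proof.
rewrite size_pos_system; apply: eq_bigr => i _; apply: eq_bigr => j _.
by rewrite !nth_pos_system // -(pair_term_signs t x (s i) (s j)).
Qed.

Lemma pos_system_root_neq0 (R : numFieldType) t s (x : R * R) :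
  (forall b, b \in pos_system t s -> root_fun t b x != 0) ->
  all (fun b => root_fun t b x != 0) (std_pos_roots t).
Proof.
move=> nz; apply/(all_nthP 0) => i lt_i.
have lt_i_pos : (i < size (pos_system t s))%N by rewrite size_pos_system.
have := nz _ (mem_nth 0 lt_i_pos); rewrite nth_pos_system //.
by case: (s i); rewrite ?root_funN ?oppr_eq0.
Qed.

Lemma std_sum_eq0 (R : numFieldType) t (x : R * R) :
  all (fun b => root_fun t b x != 0) (std_pos_roots t) ->
  \sum_(i < size (std_pos_roots t)) \sum_(j < size (std_pos_roots t) | i != j)
      pair_term t x (std_pos_roots t)`_i (std_pos_roots t)`_j = 0.
Proof.
rewrite /pair_term.
case: t (root_fun_linear t x) => -[p [q coord]];
rewrite (eq_bigr _ (fun i _ => big_mkcond _ _)) /= !big_ord_recr !big_ord0 /= !coord /rform /=;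
rewrite ?(mulr0z, mulr1z, mul0r, mul1r, addr0, add0r) => nz;
(* the side conditions left by [field] are the conjuncts of [nz], reordered *)
field; do ![case/andP: nz => ? nz]; by do ?[apply/andP; split].
Qed.

Theorem mainTheorem16 (R : numFieldType) (t : rank2_type) (s : nat -> bool)
    (x : R * R) :
  (forall b, b \in pos_system t s -> root_fun t b x != 0) ->
  \sum_(i < size (pos_system t s)) \sum_(j < size (pos_system t s) | i != j)
     ((rform t (pos_system t s)`_i (pos_system t s)`_j)%:~R
        / (root_fun t (pos_system t s)`_i x * root_fun t (pos_system t s)`_j x))
  = 0.
Proof.
by move=> /pos_system_root_neq0 nz; rewrite sum_pos_system std_sum_eq0.
Qed.
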